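(* Let $\delta \ge 0$. For each integer $n \ge 1$ let $\rho_n > 0$ be the positive solution of the equation $$\int_{1/n}^\infty e^{-\rho_n x}\,Q(dx) = \bar{Q}(1/n) + \delta - \frac{\sigma^2}{2}\rho_n^2 + \mu\rho_n,$$ equivalently of $\delta - \frac{\sigma^2}{2}\rho_n^2 + \mu\rho_n + \int_{1/n}^\infty (1-e^{-\rho_n x})\,Q(dx) = 0$. Then $\rho_n$ converges, as $n \to \infty$, to the unique solution $\rho > 0$ of the generalized Lundberg equation $\delta = \varphi_D(\rho)$.
   Context: Let $\{B_t\}_{t\ge 0}$ be a standard Brownian motion and $\{G_t\}_{t\ge0}$ an independent subordinator (non-decreasing Lévy process) with drift $\mu \ge 0$ and Lévy measure $Q(dx) = q(x)\,dx$ on $(0,\infty)$, where $\int_0^\infty (1\wedge x)\,Q(dx) < \infty$. Let $\sigma > 0$ and $D_t = G_t + \sigma B_t$. Its Laplace exponent is $$\varphi_D(u) = -\mu u + \int_0^\infty (e^{-ux}-1)\,Q(dx) + \tfrac12 u^2\sigma^2,$$ so that $\mathbb{E}[e^{-uD_t}] = e^{t\varphi_D(u)}$ for $u \ge 0$. Write $\bar{Q}(x) = Q([x,\infty))$ for $x > 0$. *)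

From mathcomp Require Import all_boot all_order all_algebra.
From mathcomp Require Import all_classical all_reals all_analysis.
Set Implicit Arguments. Unset Strict Implicit. Unset Printing Implicit Defensive.
Import Order.TTheory GRing.Theory Num.Theory.
Local Open Scope classical_set_scope.
Local Open Scope ring_scope.

(* q is the density of the Levy measure Q(dx) = q(x) dx on (0,oo):
   nonnegative, measurable on (0,oo), and int_0^oo (1 /\ x) Q(dx) < oo. *)
Definition levy_density {R : realType} (q : R -> R) : Prop :=
  [/\ (forall x : R, 0 < x -> 0 <= q x),
      measurable_fun `](0:R), +oo[ q &
      (@lebesgue_measure R).-integrable `](0:R), +oo[
        (fun x => (Num.min 1 x * q x)%:E)].

Definition Qbar {R : realType} (q : R -> R) (x : R) : R :=
  Rintegral (@lebesgue_measure R) `[x, +oo[ q.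

(* Laplace exponent of D_t = G_t + sigma B_t:
   phi_D(u) = - mu u + int_0^oo (e^{-ux} - 1) Q(dx) + u^2 sigma^2 / 2 *)
Definition phiD {R : realType} (mu sigma : R) (q : R -> R) (u : R) : R :=
  - (mu * u)
  + Rintegral (@lebesgue_measure R) `](0:R), +oo[
      (fun x => (expR (- (u * x)) - 1) * q x)
  + u ^+ 2 * sigma ^+ 2 / 2.

Definition trunc_laplace {R : realType} (q : R -> R) (a r : R) : R :=
  Rintegral (@lebesgue_measure R) `[a, +oo[ (fun x => expR (- (r * x)) * q x).

From mathcomp Require Import all_boot all_order all_algebra.
From mathcomp Require Import all_classical all_reals all_analysis.
From mathcomp Require Import lra ring.
From mathcomp Require Import measurable_realfun.
Import Order.TTheory GRing.Theory Num.Theory numFieldNormedType.Exports.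
Local Open Scope classical_set_scope.
Local Open Scope ring_scope.
Set Implicit Arguments. Unset Strict Implicit.

(* Write [G_A(u) = int_A (1 - e^{-ux}) Q(dx)] and [P(u) = sigma^2 u^2 / 2 - mu u - delta];
   the Lundberg equation is [G_(0,oo)(rho) = P(rho)] and the n-th truncated one is
   [G_[1/n,oo)(rho_n) = P(rho_n)].  Since [G_A(u) / u] is nonincreasing (concavity
   of [1 - e^{-ux}]) while [P(u) / u] is strictly increasing, [G_A] and [P] cross
   at most once, and enlarging [A] moves the crossing to the right.  Hence [rho_n]
   is nondecreasing; it is bounded because [P] grows quadratically while [G] grows
   at most linearly, so it converges.  Its limit solves the Lundberg equation:
   [G_(0,oo)] is monotone in [u], and [G_[1/m,oo)] increases to [G_(0,oo)] by
   dominated convergence. *)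

(* Shifted by one so that every [m : nat] gives a truncation [[1/(m+1), oo)]. *)
Local Notation "'cut' m" := `[(m.+1)%:R^-1, +oo[%classic (at level 10).

Lemma onem_expRN_ge0 (R : realType) (u x : R) : 0 <= u -> 0 <= x ->
  0 <= 1 - expR (- (u * x)).
Proof. by move=> u0 x0; rewrite subr_ge0 -expR0 ler_expR oppr_le0 mulr_ge0. Qed.

Lemma onem_expRN_le_min (R : realType) (u x : R) : 0 <= u -> 0 < x ->
  `|1 - expR (- (u * x))| <= (1 + u) * Num.min 1 x.
Proof.
move=> u0 x0; rewrite ger0_norm; last by rewrite onem_expRN_ge0 // ltW.
have e1 := expR_ge1Dx (- (u * x)); have e2 := expR_gt0 (- (u * x)).
have e3 : expR (- (u * x)) <= 1.
  by rewrite -subr_ge0 onem_expRN_ge0 // ltW.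
rewrite /Num.min; case: ifPn => [x1|]; first nra.
by rewrite -leNgt => x1; nra.
Qed.

(* [(1 - e^-t) / t] is nonincreasing; this is convexity of [expR] on [[-t, 0]]. *)
Lemma chord_onem_expRN (R : realType) (s t : R) : 0 <= s -> s <= t ->
  s * (1 - expR (- t)) <= t * (1 - expR (- s)).
Proof.
move=> s0 st; have [t0|t0] := eqVneq t 0.
  have s0' : s = 0 by apply/le_anti; rewrite s0 -t0 st.
  by rewrite s0' t0 !mul0r.
have tpos : 0 < t by rewrite lt_neqAle eq_sym t0 (le_trans s0 st).
have h0 : 0 <= s / t by rewrite divr_ge0 // ltW.
have h1 : s / t <= 1 by rewrite ler_pdivrMr // mul1r.
have := @convex_expR R (Itv01 h0 h1) (- t) 0.
rewrite !convRE /= expR0 mulr0 addr0 mulrN divfK // /unstable.onem mulr1.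
move=> /(ler_wpM2l (ltW tpos)).
have -> : t * (s / t * expR (- t) + (1 - s / t)) = s * expR (- t) + t - s.
  by field.
lra.
Qed.

Lemma measurable_expRNM (R : realType) (u : R) :
  measurable_fun setT (fun x : R => expR (- (u * x))).
Proof.
apply: measurableT_comp; first exact: measurable_expR.
by apply: measurable_funN; exact: mulrl_measurable.
Qed.

Lemma cut_sub_pos (R : realType) m : (cut m : set R) `<=` `](0:R), +oo[.
Proof. by move=> x; rewrite /= !in_itv /= !andbT; apply: lt_le_trans. Qed.

Lemma cut_subset (R : realType) n m : (n <= m)%N -> (cut n : set R) `<=` cut m.
Proof.
move=> nm x; rewrite /= !in_itv /= !andbT; apply: le_trans.
by rewrite lef_pV2 ?posrE ?ltr0n // ler_nat.
Qed.

Section LevyExponent.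
Variables (R : realType) (q : R -> R).
Hypothesis lq : levy_density q.
Local Notation leb := (@lebesgue_measure R).
Local Notation pos := `](0:R), +oo[%classic.

Definition levy_exponent (A : set R) (u : R) : R :=
  Rintegral leb A (fun x => (1 - expR (- (u * x))) * q x).

Lemma q_ge0 x : 0 < x -> 0 <= q x.
Proof. by case: lq => q0 _ _; exact: q0. Qed.

Lemma gt0_of_sub_pos (A : set R) x : A `<=` pos -> A x -> 0 < x.
Proof. by move=> AD /AD; rewrite /= in_itv /= andbT. Qed.

Lemma levy_integrable (A : set R) (F : R -> R) (C : R) :
  measurable A -> A `<=` pos -> measurable_fun setT F ->
  (forall x, A x -> `|F x| <= C * Num.min 1 x) ->
  leb.-integrable A (EFin \o (fun x => F x * q x)).
Proof.
case: lq => _ mq iq mA AD mF FC.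
apply: (@le_integrable _ _ _ leb A _ _ (fun x => (C%:E * (Num.min 1 x * q x)%:E)%E)).
- exact: mA.
- apply/measurable_EFinP; apply: measurable_funM; first exact: measurable_funS mF.
  exact: measurable_funS mq.
- move=> x Ax /=; have qx := q_ge0 (gt0_of_sub_pos AD Ax).
  rewrite lee_fin normrM (ger0_norm qx) (le_trans _ (ler_norm _)) //.
  by rewrite mulrA ler_wpM2r ?FC.
- apply: (@integrableS _ _ _ leb pos A) => //.
  exact: (integrableZl _ C iq).
Qed.

Lemma levy_exponent_integrable (A : set R) u : measurable A -> A `<=` pos -> 0 <= u ->
  leb.-integrable A (EFin \o (fun x => (1 - expR (- (u * x))) * q x)).
Proof.
move=> mA AD u0; apply: (levy_integrable (C := 1 + u)) => //.
- by apply: measurable_funB => //; exact: measurable_expRNM.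
- by move=> x /(gt0_of_sub_pos AD); exact: onem_expRN_le_min.
Qed.

Lemma levy_exponent_integrableZ (A : set R) u c : measurable A -> A `<=` pos ->
  0 <= u -> leb.-integrable A (EFin \o (fun x => c * ((1 - expR (- (u * x))) * q x))).
Proof.
move=> mA AD u0.
apply: (@eq_integrable _ _ _ leb A _
  (EFin \o (fun x => (c * (1 - expR (- (u * x)))) * q x))) => [//||].
  by move=> x _ /=; rewrite mulrA.
apply: (levy_integrable (C := `|c| * (1 + u))) => //.
- by apply: measurable_funM => //; apply: measurable_funB => //; exact: measurable_expRNM.
- move=> x /(gt0_of_sub_pos AD) x0; rewrite normrM -mulrA ler_wpM2l //.
  exact: onem_expRN_le_min.
Qed.

Lemma levy_integrand_ge0 u x : 0 <= u -> 0 < x -> 0 <= (1 - expR (- (u * x))) * q x.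
Proof. by move=> u0 x0; rewrite mulr_ge0 ?q_ge0 // onem_expRN_ge0 // ltW. Qed.

Lemma levy_exponent_subset (A B : set R) u : measurable A -> measurable B ->
  A `<=` B -> B `<=` pos -> 0 <= u -> levy_exponent A u <= levy_exponent B u.
Proof.
move=> mA mB AB BD u0; have AD := subset_trans AB BD.
rewrite /levy_exponent /Rintegral fine_le ?integrable_fin_num
  ?levy_exponent_integrable //.
apply: ge0_subset_integral => //; first exact/measurable_int/levy_exponent_integrable.
by move=> x /(gt0_of_sub_pos BD) x0; rewrite lee_fin levy_integrand_ge0.
Qed.

Lemma levy_exponent_le (A : set R) u v : measurable A -> A `<=` pos ->
  0 <= u -> u <= v -> levy_exponent A u <= levy_exponent A v.
Proof.
move=> mA AD u0 uv; have v0 := le_trans u0 uv.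
apply: le_Rintegral => [//||| x /(gt0_of_sub_pos AD) x0];
  try exact: levy_exponent_integrable.
apply: ler_wpM2r; first exact: q_ge0.
by rewrite lerD2l lerN2 ler_expR lerN2 ler_wpM2r // ltW.
Qed.

Lemma levy_exponent_chord (A : set R) a b : measurable A -> A `<=` pos ->
  0 < a -> a <= b -> a * levy_exponent A b <= b * levy_exponent A a.
Proof.
move=> mA AD a0 ab; have b0 := ltW (lt_le_trans a0 ab).
rewrite /levy_exponent -!RintegralZl ?levy_exponent_integrable ?(ltW a0) //.
apply: le_Rintegral => [//||| x /(gt0_of_sub_pos AD) x0].
- exact: levy_exponent_integrableZ.
- by apply: levy_exponent_integrableZ => //; exact: ltW.
rewrite !mulrA ler_wpM2r ?q_ge0 // -(ler_pM2r x0) mulrAC [leRHS]mulrAC.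
apply: chord_onem_expRN; first by rewrite mulr_ge0 // ltW.
by rewrite ler_wpM2r // ltW.
Qed.

Lemma levy_exponent_cut_cvg u : 0 <= u ->
  levy_exponent (cut m) u @[m --> \oo] --> levy_exponent pos u.
Proof.
move=> u0; pose f x := (1 - expR (- (u * x))) * q x.
have mpos : measurable pos by [].
have mcut m : measurable (cut m : set R) by exact: measurable_itv.
have cutD := @cut_sub_pos R.
have ipos := levy_exponent_integrable mpos (@subset_refl _ pos) u0.
pose f_ m := (EFin \o f) \_ (cut m).
have Ecut m : (levy_exponent (cut m) u)%:E = (\int[leb]_(x in pos) f_ m x)%E.
  rewrite -integral_mkcondr setIidr // fineK //.
  by rewrite integrable_fin_num // levy_exponent_integrable.
have Epos : (levy_exponent pos u)%:E = (\int[leb]_(x in pos) (EFin \o f) x)%E.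
  by rewrite fineK // integrable_fin_num.
have f_cvg : {ae leb, forall x, pos x -> f_ ^~ x @ \oo --> (EFin \o f) x}.
  apply: aeW => x x0; have [N xN] : exists N : nat, x^-1 < N%:R.
    exists (Num.Def.archi_bound x^-1); apply: archi_boundP.
    by rewrite invr_ge0 ltW // (gt0_of_sub_pos (@subset_refl _ pos)).
  apply: cvg_near_cst; exists N => // n /= Nn.
  rewrite /f_ patchT // inE /= in_itv /= andbT invf_ple ?posrE ?ltr0n //.
    by rewrite (le_trans (ltW xN)) // ler_nat leqW.
  by rewrite (gt0_of_sub_pos (@subset_refl _ pos)).
have f_dom : {ae leb, forall x n, pos x -> (`|f_ n x| <= (EFin \o f) x)%E}.
  apply: aeW => x n /(gt0_of_sub_pos (@subset_refl _ pos)) x0.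
  have fx0 : 0 <= f x by exact: levy_integrand_ge0.
  by rewrite /f_ /patch; case: ifP => _; rewrite ?abse0 lee_fin ?ger0_norm.
have mf_ n : measurable_fun pos (f_ n).
  apply: (measurable_funS _ (@subsetT _ pos)) => //.
  apply/(measurable_restrictT _ _).1 => //.
  exact: measurable_int (levy_exponent_integrable (mcut n) (cutD n) u0).
have [_ _ key] := @dominated_convergence _ _ _ leb pos mpos f_ (EFin \o f)
  (EFin \o f) mf_ (measurable_int _ ipos) f_cvg ipos f_dom.
by move: key; rewrite -Epos -(funext Ecut) => /fine_cvg.
Qed.

Lemma levy_exponent_Qbar a r : 0 < a -> 0 <= r ->
  levy_exponent `[a, +oo[ r = Qbar q a - trunc_laplace q a r.
Proof.
move=> a0 r0; have mA : measurable (`[a, +oo[ : set R) by exact: measurable_itv.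
have AD : `[a, +oo[ `<=` pos.
  by move=> x; rewrite /= !in_itv /= !andbT; exact: lt_le_trans.
have minA x : `[a, +oo[%classic x -> 1 <= (1 + a^-1) * Num.min 1 x.
  rewrite /= in_itv /= andbT => ax; have x0 := lt_le_trans a0 ax.
  have : 1 <= x * a^-1 by rewrite ler_pdivlMr // mul1r.
  by rewrite /Num.min; case: ifP; nra.
rewrite /levy_exponent /Qbar /trunc_laplace -RintegralB //.
- by apply: eq_Rintegral => x _; rewrite mulrBl mul1r.
- apply: (@eq_integrable _ _ _ leb _ _ (EFin \o (fun x => 1 * q x))) => //.
    by move=> x _ /=; rewrite mul1r.
  apply: (levy_integrable (C := 1 + a^-1)) => // x /minA.
  by rewrite normr1.
- apply: (levy_integrable (C := 1 + a^-1)) => //; first exact: measurable_expRNM.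
  move=> x Ax; apply: le_trans (minA _ Ax).
  have x0 := gt0_of_sub_pos AD Ax.
  by rewrite ger0_norm ?expR_ge0 // -subr_ge0 onem_expRN_ge0 // ltW.
Qed.

Lemma phiDE mu sigma u : 0 <= u ->
  phiD mu sigma q u = - (mu * u) - levy_exponent pos u + u ^+ 2 * sigma ^+ 2 / 2.
Proof.
move=> u0; rewrite /phiD /levy_exponent; congr (_ + _); congr (_ + _).
rewrite -[RHS]mulN1r -RintegralZl //; last exact: levy_exponent_integrable.
by apply: eq_Rintegral => x _; rewrite mulrA mulN1r opprB.
Qed.

End LevyExponent.

Section Lundberg.
Variables (R : realType) (q : R -> R) (mu sigma delta : R).
Hypotheses (lq : levy_density q) (sigma_gt0 : 0 < sigma) (delta_ge0 : 0 <= delta).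
Local Notation pos := `](0:R), +oo[%classic.
Local Notation G := (levy_exponent q).

Definition lundberg_quadratic (u : R) := sigma ^+ 2 / 2 * u ^+ 2 - mu * u - delta.
Local Notation P := lundberg_quadratic.

Lemma lundberg_rootP u : 0 <= u -> delta = phiD mu sigma q u <-> G pos u = P u.
Proof. by move=> u0; rewrite phiDE // /P; split => ?; lra. Qed.

(* [G B u / u] is nonincreasing while [P u / u] is increasing, so the graphs
   cross only once. *)
Lemma lundberg_crossing_le (A B : set R) a b : measurable A -> measurable B ->
  A `<=` B -> B `<=` pos -> 0 < a -> 0 < b ->
  P a <= G A a -> G B b <= P b -> a <= b.
Proof.
move=> mA mB AB BD a0 b0 Pa Pb; rewrite leNgt; apply/negP => ba.
have slope : b * P a <= a * P b.
  apply: le_trans (ler_wpM2l (ltW b0) Pa) _.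
  apply: le_trans (ler_wpM2l (ltW b0) (levy_exponent_subset lq mA mB AB BD (ltW a0))) _.
  apply: le_trans (levy_exponent_chord lq mB BD b0 (ltW ba)) _.
  by rewrite ler_pM2l.
have : 0 < (a - b) * (sigma ^+ 2 / 2 * (a * b) + delta).
  by rewrite mulr_gt0 ?subr_gt0 // ltr_wpDr // !mulr_gt0 // exprn_gt0.
move: slope; rewrite /P !expr2; nra.
Qed.

Lemma lundberg_root_unique a b : 0 < a -> 0 < b ->
  G pos a = P a -> G pos b = P b -> a = b.
Proof.
move=> a0 b0 Ga Gb; apply/le_anti/andP.
by split; apply: (lundberg_crossing_le (A := pos) (B := pos));
  rewrite ?Ga ?Gb.
Qed.

Lemma lundberg_bound (A : set R) u : measurable A -> A `<=` pos -> 0 < u ->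
  P u <= G A u -> u <= Num.max 1 (2 * (G pos 1 + mu + delta) / sigma ^+ 2).
Proof.
move=> mA AD u0 Pu; rewrite le_max; case: (leP u 1) => [//|u1]; apply/orP; right.
have Gu : G A u <= u * G pos 1.
  apply: le_trans (levy_exponent_subset lq mA _ AD _ (ltW u0)) _ => //.
  rewrite -[G pos u]mul1r; apply: levy_exponent_chord => //; exact: ltW.
have : delta <= delta * u by rewrite ler_peMr // ltW.
rewrite ler_pdivlMr ?exprn_gt0 //; move: Pu Gu; rewrite /P expr2; nra.
Qed.

Section Approximation.
Variable s : nat -> R.
Hypothesis s_gt0 : forall n, 0 < s n.
Hypothesis s_root : forall n, G (cut n) (s n) = P (s n).

Lemma lundberg_approx_nondecreasing : nondecreasing_seq s.
Proof.
move=> n m nm; apply: (lundberg_crossing_le (A := cut n) (B := cut m)) => //.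
- exact: cut_subset.
- exact: cut_sub_pos.
- by rewrite s_root.
- by rewrite s_root.
Qed.

Lemma lundberg_approx_cvg : s @ \oo --> sup (range s).
Proof.
apply: nondecreasing_cvgn; first exact: lundberg_approx_nondecreasing.
exists (Num.max 1 (2 * (G pos 1 + mu + delta) / sigma ^+ 2)) => _ [n _ <-].
apply: (lundberg_bound (A := cut n)) => //; first exact: cut_sub_pos.
by rewrite s_root.
Qed.

Section Limit.
Variable L : R.
Hypothesis sL : s @ \oo --> L.

Lemma lundberg_approx_le_lim n : s n <= L.
Proof.
have := nondecreasing_cvgn_le lundberg_approx_nondecreasing (cvgP _ sL) n.
by rewrite (cvg_lim _ sL).
Qed.

Lemma lundberg_approx_lim_gt0 : 0 < L.
Proof. exact: lt_le_trans (s_gt0 0) (lundberg_approx_le_lim 0). Qed.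

Lemma lundberg_quadratic_cvg : P (s n) @[n --> \oo] --> P L.
Proof.
rewrite /P; under eq_fun do rewrite expr2; rewrite expr2.
apply: cvgB; last exact: cvg_cst.
apply: cvgB; apply: cvgM; try exact: cvg_cst; last exact: sL.
exact: cvgM.
Qed.

(* For [n >= m], the chord inequality on [cut m] and [cut m `<=` cut n] give
   [s n * G (cut m) L <= L * P (s n)]; let [n] tend to infinity. *)
Lemma lundberg_approx_cut_le m : G (cut m) L <= P L.
Proof.
have L0 := lundberg_approx_lim_gt0.
have lhs : s n * G (cut m) L @[n --> \oo] --> L * G (cut m) L.
  by apply: cvgM => //; exact: cvg_cst.
have rhs : L * P (s n) @[n --> \oo] --> L * P L.
  by apply: cvgM => //; [exact: cvg_cst|exact: lundberg_quadratic_cvg].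
rewrite -(ler_pM2l L0) -(cvg_lim _ lhs) // -(cvg_lim _ rhs) //.
apply: ler_lim; [exact: cvgP lhs|exact: cvgP rhs|].
exists m => // n /= mn; rewrite -s_root.
apply: le_trans (levy_exponent_chord lq _ (@cut_sub_pos R m) (s_gt0 n)
  (lundberg_approx_le_lim n)) _; first exact: measurable_itv.
rewrite ler_pM2l // levy_exponent_subset //; last exact: ltW.
- exact: cut_subset.
- exact: cut_sub_pos.
Qed.

Lemma lundberg_approx_limit : G pos L = P L.
Proof.
have L0 := lundberg_approx_lim_gt0.
apply/le_anti/andP; split.
- rewrite -(cvg_lim _ (levy_exponent_cut_cvg lq (ltW L0))) //.
  apply: limr_le; first exact: cvgP (levy_exponent_cut_cvg lq (ltW L0)).
  by apply: nearW => m; exact: lundberg_approx_cut_le.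
- rewrite -(cvg_lim _ lundberg_quadratic_cvg) //.
  apply: limr_le; first exact: cvgP lundberg_quadratic_cvg.
  apply: nearW => n; rewrite -s_root; have sn0 := ltW (s_gt0 n).
  apply: le_trans (levy_exponent_le lq _ _ sn0 (lundberg_approx_le_lim n)) => //.
  apply: levy_exponent_subset => //; exact: cut_sub_pos.
Qed.

End Limit.

End Approximation.

End Lundberg.

Unset Implicit Arguments.

Theorem mainTheorem1 (R : realType) (mu sigma delta : R) (q : R -> R)
  (rho : nat -> R) :
  0 <= mu -> 0 < sigma -> levy_density q -> 0 <= delta ->
  (forall n : nat, (1 <= n)%N ->
     0 < rho n /\
     trunc_laplace q (n%:R^-1) (rho n)
     = Qbar q (n%:R^-1) + delta - sigma ^+ 2 / 2 * rho n ^+ 2 + mu * rho n) ->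
  exists r : R,
    [/\ 0 < r, delta = phiD mu sigma q r,
        (forall r' : R, 0 < r' -> delta = phiD mu sigma q r' -> r' = r) &
        rho @ \oo --> r].
Proof.
move=> _ sigma_gt0 lq delta_ge0 rho_root.
pose s n := rho n.+1.
have s_gt0 n : 0 < s n by have [] := rho_root n.+1 isT.
have s_root n :
    levy_exponent q (cut n) (s n) = lundberg_quadratic mu sigma delta (s n).
  have [sn0 eq] := rho_root n.+1 isT.
  rewrite levy_exponent_Qbar ?invr_gt0 ?ltr0n //; last exact: ltW.
  by rewrite /s eq /lundberg_quadratic; lra.
have s_cvg := lundberg_approx_cvg lq sigma_gt0 delta_ge0 s_gt0 s_root.
set L := sup (range s) in s_cvg.
have L_gt0 := lundberg_approx_lim_gt0 lq sigma_gt0 delta_ge0 s_gt0 s_root s_cvg.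
have L_root := lundberg_approx_limit lq sigma_gt0 delta_ge0 s_gt0 s_root s_cvg.
exists L; split => //.
- by apply/(lundberg_rootP _ _ _ lq); first exact: ltW.
- move=> r r_gt0 /(lundberg_rootP _ _ _ lq (ltW r_gt0)) r_root.
  exact: (lundberg_root_unique (mu := mu) lq sigma_gt0 delta_ge0 r_gt0 L_gt0
    r_root L_root).
- by rewrite -cvg_shiftS.
Qed.
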